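(* Let $(X,\Sigma)$ be a measurable space and $p$ a transition function on it with associated operator $A$ on $ba(X,\Sigma)$. Suppose $A$ has a finitely additive cycle of measures $K=\{\mu_1,\dots,\mu_m\}\subset S_{ba}$ (of any period $m$) whose mean measure $\mu=\frac1m\sum_{i=1}^m\mu_i$ is the only invariant finitely additive probability measure of $A$, i.e. $\Delta_{ba}=\{\mu\}$. Then the cycle $K$ (all $\mu_i$) and its mean measure $\mu$ are countably additive.
   Context: $X$ is an arbitrary infinite set and $\Sigma$ a $\sigma$-algebra of subsets of $X$ containing all one-point sets. $ba(X,\Sigma)$ denotes the space of bounded finitely additive real-valued measures on $\Sigma$, $S_{ba}=\{\mu\in ba(X,\Sigma):\mu\ge0,\ \mu(X)=1\}$, and $\Delta_{ba}=\{\mu\in S_{ba}:A\mu=\mu\}$. A transition function is a map $p(x,E)$ with $0\le p(x,E)\le1$, $p(x,X)=1$, $p(\cdot,E)$ bounded $\Sigma$-measurable for every $E\in\Sigma$, and $p(x,\cdot)$ countably additive for every $x\in X$. The Markov operator is $A\mu(E)=\int_X p(x,E)\,\mu(dx)$. A cycle of measures of $A$ is a finite numbered set $\{\mu_1,\dots,\mu_m\}$ of pairwise different positive finitely additive measures with $A\mu_i=\mu_{i+1}$ ($1\le i\le m-1$), $A\mu_m=\mu_1$. *)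

From HB Require Import structures.
From mathcomp Require Import all_boot all_order all_algebra.
From mathcomp Require Import all_classical all_reals all_analysis.
Set Implicit Arguments. Unset Strict Implicit. Unset Printing Implicit Defensive.
Import Order.TTheory GRing.Theory Num.Theory.
Import numFieldNormedType.Exports.
Local Open Scope classical_set_scope.
Local Open Scope ring_scope.

(* Finitely additive (set) functions on the sigma-algebra [measurable] of X.
   A finitely additive measure is represented by a function mu : set X -> R;
   only its values on measurable sets matter. *)
Section FADefs.
Context {d : measure_display} {X : measurableType d} {R : realType}.

(* mu belongs to S_ba: positive, finitely additive, mu(X) = 1
   (boundedness follows: 0 <= mu E <= 1). *)
Definition fa_prob (mu : set X -> R) : Prop :=
  [/\ forall E, measurable E -> 0 <= mu E,
      mu setT = 1 &
      forall E F, measurable E -> measurable F -> E `&` F = set0 ->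
        mu (E `|` F) = mu E + mu F].

Definition meq (mu nu : set X -> R) : Prop :=
  forall E, measurable E -> mu E = nu E.

Definition countably_additive (mu : set X -> R) : Prop :=
  forall F : nat -> set X, (forall n, measurable (F n)) -> trivIset setT F ->
    (fun n => \sum_(i < n) mu (F i)) @ \oo --> mu (\bigcup_n F n).

Definition transition_function (p : X -> set X -> R) : Prop :=
  [/\ forall x E, measurable E -> 0 <= p x E <= 1,
      forall x, p x setT = 1,
      forall E, measurable E -> measurable_fun setT (fun x => p x E) &
      forall x, countably_additive (p x)].

Definition lower_simple_sums (mu : set X -> R) (f : X -> R) : set R :=
  [set r | exists n (a : 'I_n -> R) (E : 'I_n -> set X),
     [/\ forall i, measurable (E i),
         forall i j, i != j -> E i `&` E j = set0,
         forall x, \sum_(i < n) a i * \1_(E i) x <= f x &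
         r = \sum_(i < n) a i * mu (E i)]].

(* integral of a bounded measurable function w.r.t. a positive finitely
   additive measure (Dunford-Schwartz integral) *)
Definition fa_integral (mu : set X -> R) (f : X -> R) : R :=
  sup (lower_simple_sums mu f).

Definition markov_op (p : X -> set X -> R) (mu : set X -> R) : set X -> R :=
  fun E => fa_integral mu (fun x => p x E).

Definition mean_measure (m : nat) (mu : nat -> set X -> R) : set X -> R :=
  fun E => m%:R^-1 * \sum_(i < m) mu i E.

End FADefs.

From HB Require Import structures.
From mathcomp Require Import all_boot all_order all_algebra.
From mathcomp Require Import all_classical all_reals all_analysis.
From mathcomp Require Import lra.
Import Order.TTheory GRing.Theory Num.Theory.
Import numFieldNormedType.Exports.
Local Open Scope classical_set_scope.
Local Open Scope ring_scope.

(* The Cesaro averages lam n of the orbit A^k p(x0, .) satisfy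
   |A lam n - lam n| <= 1/(n+1) setwise, so every ultrafilter limit of (lam n)
   is an invariant finitely additive probability, hence equals the mean mu of
   the cycle: lam n converges to mu setwise.  Each lam n is countably additive,
   since p(x, .) is and A preserves continuity along decreasing sequences of
   sets with empty intersection.  A gliding hump argument shows that a setwise
   limit of such measures is again countably additive, so mu is; finally
   mu_i <= m mu. *)

Lemma eq_of_dist_le_divn {R : realType} (x y c : R) :
  (forall N : nat, (0 < N)%N -> `|x - y| <= c / N%:R) -> x = y.
Proof.
move=> le_xy; apply/eqP; rewrite -subr_eq0 -normr_le0; apply/ler_addgt0Pr => e e0.
have c0 : 0 <= c by have := le_xy 1%N isT; rewrite divr1; apply: le_trans.
pose N := (Num.truncn (c / e)).+1.
apply: le_trans (le_xy N isT) _; rewrite add0r ler_pdivrMr ?ltr0n //.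
by rewrite mulrC -ler_pdivrMr // ltW // truncnS_gt.
Qed.

Section FiniteAdditivity.
Context {d : measure_display} {X : measurableType d} {R : realType}.

Definition nonneg_additive (rho : set X -> R) : Prop :=
  (forall E, measurable E -> 0 <= rho E) /\
  (forall E F, measurable E -> measurable F -> E `&` F = set0 ->
     rho (E `|` F) = rho E + rho F).

Lemma fa_prob_nonneg_additive {rho : set X -> R} : fa_prob rho -> nonneg_additive rho.
Proof. by case. Qed.

Context {rho : set X -> R} (rho_add : nonneg_additive rho).

Lemma fa_ge0 {E} : measurable E -> 0 <= rho E.
Proof. exact: rho_add.1. Qed.

Lemma faU {E F} : measurable E -> measurable F -> E `&` F = set0 ->
  rho (E `|` F) = rho E + rho F.
Proof. exact: rho_add.2. Qed.

Lemma fa0 : rho set0 = 0.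
Proof.
have := faU measurable0 measurable0 (setI0 _); rewrite setU0 => h; lra.
Qed.

Lemma faD {E F} : measurable E -> measurable F -> E `<=` F ->
  rho (F `\` E) = rho F - rho E.
Proof.
move=> mE mF EF; rewrite -{2}(setDUK EF) faU //; first lra.
- exact: measurableD.
- by rewrite setDE setICA setICr setI0.
Qed.

Lemma fa_le {E F} : measurable E -> measurable F -> E `<=` F -> rho E <= rho F.
Proof.
by move=> mE mF EF; rewrite -subr_ge0 -faD //; apply: fa_ge0; exact: measurableD.
Qed.

Lemma fa_bigsetU (I : eqType) (r : seq I) (F : I -> set X) A :
  uniq r -> measurable A -> (forall i, measurable (F i)) ->
  (forall i j, i != j -> F i `&` F j = set0) ->
  rho (A `&` \big[setU/set0]_(i <- r) F i) = \sum_(i <- r) rho (A `&` F i).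
Proof.
move=> + mA mF dF; elim: r => [|a r IH]; first by rewrite !big_nil setI0 fa0.
case/andP => a_r /IH {}IH; rewrite !big_cons setIUr faU ?IH //.
- exact: measurableI.
- by apply: measurableI => //; exact: bigsetU_measurable.
rewrite setIACA setIid big_distrr /= big1_seq ?setI0 // => i /andP[_ ir].
by apply: dF; apply: contraNneq a_r => ->.
Qed.

Lemma fa_partition {T : finType} {lab : X -> T} {E} :
  measurable E -> (forall t, measurable (lab @^-1` [set t])) ->
  \sum_t rho (E `&` lab @^-1` [set t]) = rho E.
Proof.
move=> mE mlab.
have dlab s t : s != t -> lab @^-1` [set s] `&` lab @^-1` [set t] = set0.
  by move=> st; apply/seteqP; split=> x // [/= xs xt]; move: st; rewrite -xs xt eqxx.
rewrite -fa_bigsetU ?index_enum_uniq //; congr rho; rewrite -[RHS]setIT.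
congr (_ `&` _); apply/seteqP; split=> // x _.
rewrite -bigcup_seq; exists (lab x) => //=; exact: mem_index_enum.
Qed.

Lemma fa_sum_disjoint_le n (E : 'I_n -> set X) A :
  measurable A -> (forall i, measurable (E i)) ->
  (forall i j, i != j -> E i `&` E j = set0) ->
  \sum_(i < n) rho (A `&` E i) <= rho A.
Proof.
move=> mA mE dE; rewrite -fa_bigsetU ?index_enum_uniq //.
by apply: fa_le => //; apply: measurableI => //; exact: bigsetU_measurable.
Qed.

End FiniteAdditivity.

Lemma fa_prob01 {d : measure_display} {X : measurableType d} {R : realType}
    {rho : set X -> R} {E} :
  fa_prob rho -> measurable E -> 0 <= rho E <= 1.
Proof.
move=> rho_prob mE; have rho_add := fa_prob_nonneg_additive rho_prob.
rewrite (fa_ge0 rho_add mE); case: rho_prob => _ <- _.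
exact: (fa_le rho_add mE measurableT).
Qed.

Lemma nonneg_additive_sum {d : measure_display} {X : measurableType d} {R : realType}
    {K} {w : 'I_K -> R} {rho : 'I_K -> set X -> R} :
  (forall k, nonneg_additive (rho k)) -> (forall k, 0 <= w k) ->
  nonneg_additive (fun E => \sum_(k < K) w k * rho k E).
Proof.
move=> rho_add w0; split=> [E mE|E F mE mF EF].
  by apply: sumr_ge0 => k _; rewrite mulr_ge0 ?(fa_ge0 (rho_add k)).
by rewrite -big_split; apply: eq_bigr => k _; rewrite (faU (rho_add k)) // mulrDr.
Qed.

Section LabelSandwich.
Context {d : measure_display} {X : measurableType d} {R : realType}.
Context {rho : set X -> R} (rho_add : nonneg_additive rho).

Lemma sum_indic_disjoint {n} (a : 'I_n -> R) (E : 'I_n -> set X) i x :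
  (forall i j, i != j -> E i `&` E j = set0) -> E i x ->
  \sum_(j < n) a j * \1_(E j) x = a i.
Proof.
move=> dE Eix; rewrite (bigD1 i) //= indicE mem_set // mulr1 big1 ?addr0 // => j ji.
rewrite indicE memNset ?mulr0 // => Ejx.
by have /seteqP[/(_ x) + _] := dE _ _ ji; apply; split.
Qed.

Lemma lower_simple_sums_le {T : finType} {lab : X -> T} {c : T -> R} {f} :
  (forall t, measurable (lab @^-1` [set t])) -> (forall t, 0 <= c t) ->
  (forall x, f x <= c (lab x)) ->
  forall r, lower_simple_sums rho f r ->
  r <= \sum_t c t * rho (lab @^-1` [set t]).
Proof.
move=> mlab c0 fc _ [n [a [E [mE dE aEf ->]]]].
have mEF i t : measurable (E i `&` lab @^-1` [set t]) by exact: measurableI.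
have coef_le i t : a i * rho (E i `&` lab @^-1` [set t]) <=
                   c t * rho (E i `&` lab @^-1` [set t]).
  have [[x [Eix <-]]|none] := pselect (exists x, E i x /\ lab x = t).
    rewrite ler_wpM2r ?(fa_ge0 rho_add) //.
    by rewrite -(sum_indic_disjoint a E i x dE Eix); apply: le_trans (aEf x) (fc x).
  have -> : E i `&` lab @^-1` [set t] = set0.
    by apply/seteqP; split=> x // [Eix xt]; apply: none; exists x.
  by rewrite (fa0 rho_add) !mulr0.
apply: (@le_trans _ _ (\sum_(i < n) \sum_t c t * rho (E i `&` lab @^-1` [set t]))).
  apply: ler_sum => i _; rewrite -(fa_partition rho_add (mE i) mlab) mulr_sumr.
  exact: ler_sum.
rewrite exchange_big /=; apply: ler_sum => t _; rewrite -mulr_sumr ler_wpM2l //.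
under eq_bigr do rewrite setIC.
exact: (fa_sum_disjoint_le rho_add).
Qed.

Lemma const_label_preimage (t : unit) : (fun _ : X => tt) @^-1` [set t] = setT.
Proof. by case: t; apply/seteqP; split. Qed.

Lemma sum_const_label (c : unit -> R) :
  \sum_t c t * rho ((fun _ : X => tt) @^-1` [set t]) = c tt * rho setT.
Proof. by rewrite (bigD1 tt) //= big_pred0 ?addr0 ?const_label_preimage //; case. Qed.

Lemma measurable_const_label (t : unit) : measurable ((fun _ : X => tt) @^-1` [set t]).
Proof. by rewrite const_label_preimage. Qed.

Lemma has_ubound_lower_simple_sums f :
  (forall x, f x <= 1) -> has_ubound (lower_simple_sums rho f).
Proof.
move=> f1; exists (rho setT) => r.
move/(@lower_simple_sums_le _ _ (fun=> 1) _ measurable_const_label) => /=.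
by rewrite sum_const_label mul1r; apply.
Qed.

Lemma lower_simple_sums0 f : (forall x, 0 <= f x) -> lower_simple_sums rho f 0.
Proof.
move=> f0; exists 0%N, (fun=> 0), (fun=> set0); split=> //; first by case.
  by move=> x; rewrite big_ord0.
by rewrite big_ord0.
Qed.

Lemma fa_integral_le_label {T : finType} {lab : X -> T} {c : T -> R} {f} :
  (forall t, measurable (lab @^-1` [set t])) -> (forall t, 0 <= c t) ->
  (forall x, 0 <= f x) -> (forall x, f x <= c (lab x)) ->
  fa_integral rho f <= \sum_t c t * rho (lab @^-1` [set t]).
Proof.
move=> mlab c0 f0 fc; apply: ge_sup; last exact: lower_simple_sums_le.
by exists 0; exact: lower_simple_sums0.
Qed.

Lemma fa_integral_ge_label {T : finType} {lab : X -> T} {c : T -> R} {f} :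
  (forall t, measurable (lab @^-1` [set t])) -> (forall x, 0 <= f x <= 1) ->
  (forall x, c (lab x) <= f x) ->
  \sum_t c t * rho (lab @^-1` [set t]) <= fa_integral rho f.
Proof.
move=> mlab f01 cf.
have reindex (G : T -> R) : \sum_(i < #|T|) G (enum_val i) = \sum_t G t.
  by rewrite -big_enum_val.
apply: ub_le_sup.
  by apply: has_ubound_lower_simple_sums => x; case/andP: (f01 x).
exists #|T|, (c \o enum_val), (fun i => lab @^-1` [set enum_val i]); split.
- by move=> i; exact: mlab.
- move=> i j ij; apply/seteqP; split=> x // [/= xi xj].
  by move: ij; rewrite (enum_val_inj (etrans (esym xi) xj)) eqxx.
- move=> x; rewrite (reindex (fun t => c t * \1_(lab @^-1` [set t]) x)).
  rewrite (bigD1 (lab x)) //= indicE mem_set // mulr1 big1 ?addr0 // => t xt.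
  by rewrite indicE memNset ?mulr0 //= => tx; rewrite tx eqxx in xt.
- by rewrite (reindex (fun t => c t * rho (lab @^-1` [set t]))).
Qed.

Lemma fa_integral_label_sandwich {T : finType} {lab : X -> T} {c : T -> R} {h : R} {f} :
  (forall t, measurable (lab @^-1` [set t])) -> (forall t, 0 <= c t) -> 0 <= h ->
  (forall x, 0 <= f x <= 1) -> (forall x, c (lab x) <= f x <= c (lab x) + h) ->
  \sum_t c t * rho (lab @^-1` [set t]) <= fa_integral rho f <=
  \sum_t c t * rho (lab @^-1` [set t]) + h * rho setT.
Proof.
move=> mlab c0 h0 f01 cf; rewrite fa_integral_ge_label //=; last first.
  by move=> x; case/andP: (cf x).
apply: le_trans (@fa_integral_le_label _ lab (fun t => c t + h) _ mlab _ _ _) _.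
- by move=> t; rewrite addr_ge0.
- by move=> x; case/andP: (f01 x).
- by move=> x; case/andP: (cf x).
rewrite -(fa_partition rho_add measurableT mlab) mulr_sumr -big_split /=.
by apply: ler_sum => t _; rewrite setTI mulrDl.
Qed.

Lemma fa_integral_ge0 f : (forall x, 0 <= f x <= 1) -> 0 <= fa_integral rho f.
Proof.
move=> f01; apply: ub_le_sup; last by apply: lower_simple_sums0 => x; case/andP: (f01 x).
by apply: has_ubound_lower_simple_sums => x; case/andP: (f01 x).
Qed.

Lemma fa_integral1 : fa_integral rho (fun=> 1) = rho setT.
Proof.
apply/le_anti/andP; split.
  have := @fa_integral_le_label _ _ (fun=> 1) (fun=> 1) measurable_const_label.
  by rewrite sum_const_label mul1r; apply.
have := @fa_integral_ge_label _ _ (fun=> 1) (fun=> 1) measurable_const_label.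
by rewrite sum_const_label mul1r; apply=> // x; rewrite ler01 lexx.
Qed.

Lemma measurable_superlevel {f : X -> R} (a : R) :
  measurable_fun setT f -> measurable [set x | a <= f x].
Proof.
move=> mf; have := mf measurableT _ (measurable_itv `[a, +oo[).
by congr measurable; apply/seteqP; split=> x /=; rewrite in_itv /= andbT //; case.
Qed.

Lemma fa_integral_le_superlevel {f : X -> R} {a : R} : measurable_fun setT f ->
  (forall x, 0 <= f x <= 1) -> 0 <= a ->
  fa_integral rho f <= rho [set x | a <= f x] + a * rho setT.
Proof.
move=> mf f01 a0; pose lab x := a <= f x.
have labF : lab @^-1` [set false] = ~` [set x | a <= f x].
  by apply/seteqP; split=> x; rewrite /lab /=; case: (_ <= _).
have mlab b : measurable (lab @^-1` [set b]).
  by case: b; rewrite ?labF; [|apply: measurableC]; exact: measurable_superlevel.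
apply: le_trans
  (fa_integral_le_label (c := fun b : bool => if b then 1 else a) mlab _ _ _) _.
- by case.
- by move=> x; case/andP: (f01 x).
- move=> x; rewrite /lab; case: ifP => [_|/negbT]; last by rewrite -ltNge => /ltW.
  by case/andP: (f01 x).
rewrite big_bool mul1r lerD2l ler_wpM2l //.
by apply: fa_le => //; exact: mlab.
Qed.

End LabelSandwich.

Section Levels.
Context {d : measure_display} {X : measurableType d} {R : realType}.

Definition level (N : nat) (f : X -> R) (x : X) : 'I_N.+1 :=
  inord (Num.truncn (N%:R * f x)).

Lemma level_val N (f : X -> R) x :
  0 <= f x <= 1 -> level N f x = Num.truncn (N%:R * f x) :> nat.
Proof.
case/andP=> f0 f1; rewrite inordK // truncn_lt_nat ?mulr_ge0 //.
by rewrite (le_lt_trans (y := N%:R)) ?ler_piMr ?ltr_nat.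
Qed.

Lemma level_bounds N (f : X -> R) x : (0 < N)%N -> 0 <= f x <= 1 ->
  (level N f x)%:R / N%:R <= f x <= (level N f x)%:R / N%:R + N%:R^-1.
Proof.
move=> N0 f01; have N0' : 0 < N%:R :> R by rewrite ltr0n.
rewrite level_val //; case/andP: (f01) => f0 _.
case/andP: (truncn_itv (mulr_ge0 (ler0n _ N) f0)) => lo hi.
rewrite ler_pdivrMr // (mulrC (f x)) lo /= -[X in _ <= _ + X]mul1r -mulrDl.
by rewrite ler_pdivlMr // (mulrC (f x)) natr1 ltW.
Qed.

Lemma measurable_level N (f : X -> R) :
  measurable_fun setT f -> (forall x, 0 <= f x <= 1) ->
  forall t, measurable (level N f @^-1` [set t]).
Proof.
move=> mf f01 t.
have mNf : measurable_fun setT (fun x => N%:R * f x).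
  exact: measurable_realfun.measurable_funM.
have := mNf measurableT _ (measurable_itv `[t%:R, t.+1%:R[).
congr measurable; apply/seteqP; split=> x /=.
- have Nf0 : 0 <= N%:R * f x by rewrite mulr_ge0 //; case/andP: (f01 x).
  move=> [_]; rewrite in_itv /= => Nf_itv; apply: val_inj => /=.
  by rewrite level_val //; apply/eqP; rewrite truncn_eq.
- move=> <-; split=> //; rewrite in_itv /= level_val //.
  by apply: truncn_itv; rewrite mulr_ge0 //; case/andP: (f01 x).
Qed.

Lemma measurable_level_pair N {f g : X -> R} :
  measurable_fun setT f -> (forall x, 0 <= f x <= 1) ->
  measurable_fun setT g -> (forall x, 0 <= g x <= 1) ->
  forall t, measurable ((fun x => (level N f x, level N g x)) @^-1` [set t]).
Proof.
move=> mf f01 mg g01 [a b].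
have -> : (fun x => (level N f x, level N g x)) @^-1` [set (a, b)] =
          level N f @^-1` [set a] `&` level N g @^-1` [set b].
  by apply/seteqP; split=> x /=; [case=> -> ->|case=> -> ->].
by apply: measurableI; exact: measurable_level.
Qed.

Definition level_sum N (rho : set X -> R) f :=
  \sum_(t : 'I_N.+1) (t%:R / N%:R) * rho (level N f @^-1` [set t]).

Lemma fa_integral_level_sandwich {rho : set X -> R} {f : X -> R} {N} :
  nonneg_additive rho -> (0 < N)%N ->
  measurable_fun setT f -> (forall x, 0 <= f x <= 1) ->
  level_sum N rho f <= fa_integral rho f <= level_sum N rho f + N%:R^-1 * rho setT.
Proof.
move=> rho_add N0 mf f01.
apply: (@fa_integral_label_sandwich _ _ _ _ rho_add _ _ (fun t : 'I_N.+1 => t%:R / N%:R))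
  => //; first exact: measurable_level.
by move=> x; exact: level_bounds.
Qed.

End Levels.

Section IntegralLinearity.
Context {d : measure_display} {X : measurableType d} {R : realType}.

Lemma fa_integralD {rho : set X -> R} {f g : X -> R} : nonneg_additive rho ->
  measurable_fun setT f -> measurable_fun setT g ->
  (forall x, 0 <= f x) -> (forall x, 0 <= g x) -> (forall x, f x + g x <= 1) ->
  fa_integral rho (f \+ g) = fa_integral rho f + fa_integral rho g.
Proof.
move=> rho_add mf mg f0 g0 fg1.
have f01 x : 0 <= f x <= 1 by rewrite f0 /=; have := fg1 x; have := g0 x; lra.
have g01 x : 0 <= g x <= 1 by rewrite g0 /=; have := fg1 x; have := f0 x; lra.
have fg01 x : 0 <= f x + g x <= 1 by rewrite addr_ge0 // fg1.
apply: (@eq_of_dist_le_divn _ _ _ (2 * rho setT)) => N N0.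
pose lab x := (level N f x, level N g x).
have mlab := measurable_level_pair N mf f01 mg g01.
have N0' : 0 < N%:R :> R by rewrite ltr0n.
have iN0 : 0 <= N%:R^-1 :> R by rewrite invr_ge0 ltW.
pose c1 (t : 'I_N.+1 * 'I_N.+1) := t.1%:R / N%:R : R.
pose c2 (t : 'I_N.+1 * 'I_N.+1) := t.2%:R / N%:R : R.
have c10 t : 0 <= c1 t by rewrite divr_ge0.
have c20 t : 0 <= c2 t by rewrite divr_ge0.
have lb_f x := level_bounds N f x N0 (f01 x).
have lb_g x := level_bounds N g x N0 (g01 x).
have := fa_integral_label_sandwich rho_add mlab c10 iN0 f01 lb_f.
have := fa_integral_label_sandwich rho_add mlab c20 iN0 g01 lb_g.
have := @fa_integral_label_sandwich _ _ _ _ rho_add _ lab (fun t => c1 t + c2 t)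
  (N%:R^-1 + N%:R^-1) (f \+ g) mlab (fun t => addr_ge0 (c10 t) (c20 t))
  (addr_ge0 iN0 iN0) fg01.
have lb_fg x : c1 (lab x) + c2 (lab x) <= (f \+ g) x <=
                 c1 (lab x) + c2 (lab x) + (N%:R^-1 + N%:R^-1).
  rewrite /c1 /c2 /=.
  by move: (lb_f x) (lb_g x) => /andP[? ?] /andP[? ?]; apply/andP; split; lra.
move=> /(_ lb_fg); under eq_bigr do rewrite mulrDl; rewrite big_split /=.
have -> : 2 * rho setT / N%:R = N%:R^-1 * rho setT + N%:R^-1 * rho setT.
  by rewrite mulrAC mulrC; lra.
move=> /andP[? ?] /andP[? ?] /andP[? ?]; rewrite ler_norml; apply/andP; split; lra.
Qed.

Lemma fa_integral_sum {K} {w : 'I_K -> R} {rho : 'I_K -> set X -> R} {f : X -> R} :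
  (forall k, nonneg_additive (rho k)) -> (forall k, 0 <= w k) ->
  measurable_fun setT f -> (forall x, 0 <= f x <= 1) ->
  fa_integral (fun E => \sum_(k < K) w k * rho k E) f =
  \sum_(k < K) w k * fa_integral (rho k) f.
Proof.
move=> rho_add w0 mf f01.
set lam := fun E => _.
have lam_add : nonneg_additive lam := nonneg_additive_sum rho_add w0.
apply: (@eq_of_dist_le_divn _ _ _ (lam setT)) => N N0.
have level_sum_lam : level_sum N lam f = \sum_(k < K) w k * level_sum N (rho k) f.
  rewrite /level_sum /lam; under eq_bigr do rewrite mulr_sumr.
  rewrite exchange_big /=; apply: eq_bigr => k _; rewrite mulr_sumr.
  by apply: eq_bigr => t _; rewrite mulrCA.
have /andP[lam_lo lam_hi] := fa_integral_level_sandwich lam_add N0 mf f01.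
have sandwich_k k := fa_integral_level_sandwich (rho_add k) N0 mf f01.
have sum_lo : level_sum N lam f <= \sum_(k < K) w k * fa_integral (rho k) f.
  rewrite level_sum_lam; apply: ler_sum => k _; rewrite ler_wpM2l //.
  by case/andP: (sandwich_k k).
have sum_hi : \sum_(k < K) w k * fa_integral (rho k) f <=
              level_sum N lam f + N%:R^-1 * lam setT.
  rewrite level_sum_lam /lam mulr_sumr -big_split /=; apply: ler_sum => k _.
  by rewrite mulrCA -mulrDr ler_wpM2l //; case/andP: (sandwich_k k).
rewrite mulrC ler_norml; apply/andP; split; lra.
Qed.

End IntegralLinearity.

Lemma cvgr_sum {R : realType} {T : Type} {F : set_system T} {FF : Filter F}
    {I : Type} (r : seq I) (a : I -> T -> R) (l : I -> R) :
  (forall i, a i t @[t --> F] --> l i) ->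
  \sum_(i <- r) a i t @[t --> F] --> \sum_(i <- r) l i.
Proof. by move=> a_l; apply: cvg_big => //; exact: add_continuous. Qed.

Lemma cvgr0_nonnegP {R : realType} {u : nat -> R} : (forall n, 0 <= u n) ->
  u n @[n --> \oo] --> 0 <-> forall e, 0 < e -> exists M, forall n, (M <= n)%N -> u n < e.
Proof.
move=> u0; rewrite cvgrPdist_lt; split=> [u_small e e0|u_small e e0].
  have [M _ uM] := u_small e e0; exists M => n Mn.
  by have := uM n Mn; rewrite /= sub0r normrN ger0_norm.
have [M uM] := u_small e e0; exists M => // n Mn.
by rewrite /= sub0r normrN ger0_norm ?uM.
Qed.

Lemma decreasing_setsW {T : Type} {E : nat -> set T} :
  (forall j, E j.+1 `<=` E j) -> forall i j, (i <= j)%N -> E j `<=` E i.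
Proof.
move=> Edec i j /subnKC <-; elim: (j - i)%N => [|k IH]; first by rewrite addn0.
by rewrite addnS; apply: subset_trans (Edec _) IH.
Qed.

Section ContinuityAtEmptySet.
Context {d : measure_display} {X : measurableType d} {R : realType}.

Definition continuous_at_set0 (rho : set X -> R) : Prop :=
  forall E : nat -> set X, (forall j, measurable (E j)) ->
    (forall j, E j.+1 `<=` E j) -> \bigcap_j E j = set0 ->
    rho (E j) @[j --> \oo] --> 0.

Lemma countably_additive_nonneg_additive (rho : set X -> R) :
  (forall E, measurable E -> 0 <= rho E) -> countably_additive rho ->
  nonneg_additive rho.
Proof.
move=> rho0 rho_ca; split=> // E F mE mF EF.
have rho_set0 : rho set0 = 0.
  have tI : trivIset setT (fun _ : nat => @set0 X) by move=> i j _ _ [x []].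
  have cvg_rho := rho_ca (fun=> set0) (fun=> measurable0) tI.
  have : (fun=> rho set0) @ \oo --> (0 : R).
    apply: cvg_series_cvg_0; apply/cvg_ex; exists (rho (\bigcup_(n : nat) set0)).
    apply: cvg_trans cvg_rho; apply: near_eq_cvg; near=> n.
    by rewrite /series /= big_mkord.
  by move/(cvg_lim (@Rhausdorff R)); rewrite lim_cst.
pose G n := if n == 0%N then E else if n == 1%N then F else set0.
have mG n : measurable (G n) by rewrite /G; do 2?case: ifP => _.
have tG : trivIset setT G.
  move=> i j _ _ [x]; rewrite /G.
  have EFx : ~ (E x /\ F x) by move=> EFx; have /seteqP[/(_ x) + _] := EF; apply.
  by case: i => [|[|i]]; case: j => [|[|j]] //=; tauto.
have UG : \bigcup_n G n = E `|` F.
  apply/seteqP; split=> [x [[|[|n]]] //= _|x [Ex|Fx]].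
  - by left.
  - by right.
  - by exists 0%N.
  - by exists 1%N.
have := rho_ca G mG tG; rewrite UG => cvgEF.
rewrite -(cvg_lim (@Rhausdorff R) cvgEF); apply: cvg_lim => //.
apply: cvg_near_cst; near=> n.
have n2 : (2 <= n)%N by near: n; exists 2%N.
by rewrite -(subnKC n2) big_split_ord /= !big_ord_recl big_ord0 big1 ?addr0.
Unshelve. all: by end_near.
Qed.

Lemma continuous_at_set0_sum K (w : 'I_K -> R) (rho : 'I_K -> set X -> R) :
  (forall k, continuous_at_set0 (rho k)) ->
  continuous_at_set0 (fun E => \sum_(k < K) w k * rho k E).
Proof.
move=> rho_cont E mE Edec Ecap.
have : \sum_(k < K) w k * rho k (E j) @[j --> \oo] --> \sum_(k < K) w k * 0.
  by apply: cvgr_sum => k; apply: cvgM; [exact: cvg_cst|exact: rho_cont].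
by rewrite big1 // => k _; rewrite mulr0.
Qed.

Lemma continuous_at_set0_le (nu rho : set X -> R) (c : R) :
  (forall E, measurable E -> 0 <= nu E <= c * rho E) ->
  continuous_at_set0 rho -> continuous_at_set0 nu.
Proof.
move=> nu_le rho_cont E mE Edec Ecap.
apply: (@squeeze_cvgr _ _ _ _ (fun=> 0) (fun j => c * rho (E j))).
- by near=> j; exact: nu_le.
- exact: cvg_cst.
- by rewrite -(mulr0 c); exact: cvgM (cvg_cst _) (rho_cont E mE Edec Ecap).
Unshelve. all: by end_near.
Qed.

Variables (rho : set X -> R) (rho_add : nonneg_additive rho).

Lemma countably_additive_continuous_at_set0 :
  countably_additive rho -> continuous_at_set0 rho.
Proof.
move=> rho_ca E mE Edec Ecap; have Ele := decreasing_setsW Edec.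
pose F n := E n `\` E n.+1.
have mF n : measurable (F n) by apply: measurableD.
have tF : trivIset setT F.
  move=> i j _ _ [x [[Eix nEix] [Ejx nEjx]]].
  case: (ltngtP i j) => // ij; first by case: nEix; apply: Ele ij x Ejx.
  by case: nEjx; apply: Ele ij x Eix.
have UF : \bigcup_n F n = E 0%N.
  apply/seteqP; split=> x; first by case=> n _ [Enx _]; exact: Ele _ _ (leq0n n) x Enx.
  move=> E0x; apply: contrapT => nUF; have : (\bigcap_j E j) x; last by rewrite Ecap.
  elim=> [//|j IH] _; apply: contrapT => nEj; apply: nUF; exists j => //.
  by split=> //; exact: IH.
have sumF j : \sum_(i < j) rho (F i) = rho (E 0%N) - rho (E j).
  elim: j => [|j IH]; first by rewrite big_ord0 subrr.
  by rewrite big_ord_recr /= IH (faD rho_add (mE _) (mE _) (Edec j)); lra.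
have := rho_ca F mF tF; rewrite UF => cvg_sum.
have -> : (fun j => rho (E j)) = (fun j => rho (E 0%N) - \sum_(i < j) rho (F i)).
  by apply: funext => j; rewrite sumF; lra.
by have := cvgB (cvg_cst (rho (E 0%N))) cvg_sum; rewrite subrr; apply.
Qed.

Lemma continuous_at_set0_countably_additive :
  continuous_at_set0 rho -> countably_additive rho.
Proof.
move=> rho_cont F mF tF.
pose T n := \bigcup_i F (n + i)%N.
have mT n : measurable (T n) by apply: bigcup_measurable => i _.
have dF i j : i != j -> F i `&` F j = set0.
  move=> ij; apply/seteqP; split=> x // Fijx.
  by move/eqP: ij; apply; apply: tF => //; exists x.
have UT_disj n : \big[setU/set0]_(i < n) F i `&` T n = set0.
  rewrite big_distrl /= big1 // => i _; apply/seteqP; split=> x // [Fix [j _ Fnjx]].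
  have eq_ij : (i : nat) = (n + j)%N by apply: tF => //; exists x.
  by move: (ltn_ord i); rewrite eq_ij ltnNge leq_addr.
have split_rho n : rho (\bigcup_i F i) = \sum_(i < n) rho (F i) + rho (T n).
  have mU : measurable (\big[setU/set0]_(i < n) F i) by exact: bigsetU_measurable.
  rewrite (bigcup_splitn n) (faU rho_add mU (mT n) (UT_disj n)) -/(T n); congr (_ + _).
  rewrite -[X in rho X]setTI (fa_bigsetU rho_add) ?index_enum_uniq //.
    by apply: eq_bigr => i _; rewrite setTI.
  by move=> i j ij; apply: dF; apply: contra_neq ij; exact: val_inj.
have Tdec n : T n.+1 `<=` T n by move=> x [i _ Fx]; exists i.+1; rewrite // -addSnnS.
have Tcap : \bigcap_n T n = set0.
  apply/seteqP; split=> x // Tx; have [i _ F0ix] := Tx 0%N I.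
  have [j _ Fjx] := Tx i.+1 I.
  have eq_ij : i = (i.+1 + j)%N by apply: tF => //; exists x.
  by have := leq_addr j i.+1; rewrite -eq_ij ltnn.
have -> : (fun n => \sum_(i < n) rho (F i)) = (fun n => rho (\bigcup_i F i) - rho (T n)).
  by apply: funext => n; rewrite (split_rho n); lra.
have := cvgB (cvg_cst (rho (\bigcup_i F i))) (rho_cont T mT Tdec Tcap).
by rewrite subr0; apply.
Qed.

End ContinuityAtEmptySet.

Section MarkovOperator.
Context {d : measure_display} {X : measurableType d} {R : realType}.
Context {p : X -> set X -> R} (p_tf : transition_function p).

Lemma transition_fun01 x {E} : measurable E -> 0 <= p x E <= 1.
Proof. by case: p_tf => p01 _ _ _; exact: p01. Qed.

Lemma measurable_transition_fun {E} : measurable E -> measurable_fun setT (p ^~ E).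
Proof. by case: p_tf => _ _ mp _; exact: mp. Qed.

Lemma transition_fun_nonneg_additive x : nonneg_additive (p x).
Proof.
case: p_tf => _ _ _ p_ca; apply: countably_additive_nonneg_additive => // E mE.
by case/andP: (transition_fun01 x mE).
Qed.

Lemma transition_fun_fa_prob x : fa_prob (p x).
Proof.
case: (transition_fun_nonneg_additive x) => ? ?.
by split=> //; case: p_tf => _ ->.
Qed.

Lemma transition_fun_continuous_at_set0 x : continuous_at_set0 (p x).
Proof.
apply: countably_additive_continuous_at_set0; first exact: transition_fun_nonneg_additive.
by case: p_tf.
Qed.

Lemma markov_op_fa_prob rho : fa_prob rho -> fa_prob (markov_op p rho).
Proof.
case=> rho0 rho1 rhoU; have rho_add : nonneg_additive rho by [].
split=> [E mE|/=|E F mE mF EF].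
- by apply: (fa_integral_ge0 rho_add) => x; exact: transition_fun01.
- rewrite /markov_op (_ : p ^~ setT = fun=> 1) ?(fa_integral1 rho_add) //.
  by apply: funext => x; case: p_tf => _ ->.
- rewrite /markov_op; have -> : p ^~ (E `|` F) = p ^~ E \+ p ^~ F.
    by apply: funext => x; rewrite /= (faU (transition_fun_nonneg_additive x)).
  apply: (fa_integralD rho_add); try exact: measurable_transition_fun.
  + by move=> x; case/andP: (transition_fun01 x mE).
  + by move=> x; case/andP: (transition_fun01 x mF).
  + move=> x; rewrite -(faU (transition_fun_nonneg_additive x)) //.
    by case/andP: (transition_fun01 x (measurableU _ _ mE mF)).
Qed.

Lemma markov_op_continuous_at_set0 rho : fa_prob rho -> continuous_at_set0 rho ->
  continuous_at_set0 (markov_op p rho).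
Proof.
move=> rho_prob rho_cont E mE Edec Ecap.
have rho_add := fa_prob_nonneg_additive rho_prob.
have p_cont x := transition_fun_continuous_at_set0 x E mE Edec Ecap.
apply/cvgr0_nonnegP => [j|e e0].
  by apply: (fa_integral_ge0 rho_add) => x; exact: transition_fun01.
have e2 : 0 < e / 2 by rewrite divr_gt0.
pose G j := [set x | e / 2 <= p x (E j)].
have mG j : measurable (G j).
  exact: measurable_superlevel (e / 2) (measurable_transition_fun (mE j)).
have Gdec j : G j.+1 `<=` G j.
  move=> x /= /le_trans; apply.
  exact: (fa_le (transition_fun_nonneg_additive x) (mE _) (mE _) (Edec j)).
have Gcap : \bigcap_j G j = set0.
  apply/seteqP; split=> x // Gx.
  have p0 j := proj1 (andP (transition_fun01 x (mE j))).
  have [M pM] := (cvgr0_nonnegP p0).1 (p_cont x) _ e2.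
  by have := pM M (leqnn M); rewrite ltNge (Gx M I).
have [M rhoG] := (cvgr0_nonnegP (fun j => fa_ge0 rho_add (mG j))).1
  (rho_cont G mG Gdec Gcap) _ e2.
exists M => j Mj; have rhoGj := rhoG j Mj.
have := fa_integral_le_superlevel rho_add (measurable_transition_fun (mE j))
  (fun x => transition_fun01 x (mE j)) (ltW e2).
case: rho_prob => _ -> _; rewrite mulr1 /markov_op; lra.
Qed.

End MarkovOperator.

Lemma ultra_fmap {T V : Type} (f : T -> V) {F : set_system T} :
  UltraFilter F -> UltraFilter (f @ F).
Proof.
move=> FU; apply: Build_UltraFilter => G PG FG.
apply/seteqP; split=> [A GA|]; last exact: FG.
have [//|FnA] := in_ultra_setVsetC (f @^-1` A) FU.
have := @filter_not_empty _ G PG; rewrite -(setICr A); case.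
exact: filterI GA (FG (~` A) FnA).
Qed.

Lemma ultra_frequently (A : set nat) : (forall M, exists2 n, (M <= n)%N & A n) ->
  exists U : set_system nat, [/\ UltraFilter U, U A & U `=>` \oo].
Proof.
move=> A_inf; have PF : ProperFilter (within A \oo).
  apply: Build_ProperFilter => // -[M _ MA]; have [n Mn An] := A_inf M.
  exact: MA n Mn An.
have [U [UU AU]] := ultraFilterLemma PF; exists U; split=> //.
  by apply: AU; exists 0%N.
by move=> P [M _ MP]; apply: AU; exists M => // n Mn _; exact: MP.
Qed.

Lemma ultra_cvg_unit_interval {R : realType} {T : Type} (U : set_system T)
    {UU : UltraFilter U} (a : T -> R) :
  (forall t, 0 <= a t <= 1) -> cvg (a t @[t --> U]).
Proof.
move=> a01; have := @segment_compact R 0 1; rewrite compact_ultra.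
move=> /(_ _ (ultra_fmap a UU)) [].
  apply: (@filterS _ U _ setT); last exact: filterT.
  by move=> t _; rewrite /= in_itv; exact: a01.
by move=> l [_ al]; apply/cvg_ex; exists l.
Qed.

Section SetwiseConvergence.
Context {d : measure_display} {X : measurableType d} {R : realType}.
Context {I : Type} {F : set_system I} {PF : ProperFilter F}.
Variables (lam : I -> set X -> R) (nu : set X -> R).
Hypotheses (lam_prob : forall i, fa_prob (lam i)) (nu_prob : fa_prob nu).
Hypothesis lam_nu : forall E, measurable E -> lam i E @[i --> F] --> nu E.

Lemma fa_integral_setwise_cvg (f : X -> R) : measurable_fun setT f ->
  (forall x, 0 <= f x <= 1) ->
  fa_integral (lam i) f @[i --> F] --> fa_integral nu f.
Proof.
move=> mf f01; apply/cvgrPdist_lt => e e0.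
pose N := (Num.truncn (2 / e)).+1.
have N0 : (0 < N)%N by [].
have Ne : N%:R^-1 < e / 2.
  rewrite -[e / 2]invf_div ltf_pV2 ?posrE ?divr_gt0 ?ltr0n //.
  exact: truncnS_gt.
have level_cvg : level_sum N (lam i) f @[i --> F] --> level_sum N nu f.
  apply: cvgr_sum => t; apply: cvgM; first exact: cvg_cst.
  by apply: lam_nu; exact: measurable_level.
have mass1 rho : fa_prob rho -> rho setT = 1 by case.
move/cvgrPdist_lt : level_cvg => /(_ (e / 2)); rewrite divr_gt0 // => /(_ isT).
apply: filterS => i /=.
have /andP[nu_lo nu_hi] :=
  fa_integral_level_sandwich (fa_prob_nonneg_additive nu_prob) N0 mf f01.
have /andP[lam_lo lam_hi] :=
  fa_integral_level_sandwich (fa_prob_nonneg_additive (lam_prob i)) N0 mf f01.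
move: nu_hi lam_hi; rewrite !mass1 // !mulr1 => nu_hi lam_hi.
rewrite !ltr_norml => /andP[? ?]; apply/andP; split; lra.
Qed.

End SetwiseConvergence.

Definition ultralimit {d : measure_display} {X : measurableType d} {R : realType}
    {T : Type} (U : set_system T) (lam : T -> set X -> R) : set X -> R :=
  fun E => lim (lam t E @[t --> U]).

Section AlmostInvariantSequences.
Context {d : measure_display} {X : measurableType d} {R : realType}.
Variables (p : X -> set X -> R) (p_tf : transition_function p).
Variable lam : nat -> set X -> R.
Hypothesis lam_prob : forall n, fa_prob (lam n).
Hypothesis lam_almost_invariant : forall E, measurable E ->
  markov_op p (lam n) E - lam n E @[n --> \oo] --> 0.

Section Ultralimit.
Context (U : set_system nat) {UU : UltraFilter U}.

Lemma ultralimit_cvg {E} : measurable E -> lam n E @[n --> U] --> ultralimit U lam E.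
Proof. by move=> mE; apply: ultra_cvg_unit_interval => n; exact: fa_prob01. Qed.

Lemma ultralimit_fa_prob : fa_prob (ultralimit U lam).
Proof.
split=> [E mE|/=|E F mE mF EF].
- apply: limr_ge; first exact: ultralimit_cvg.
  by apply: filterE => n; case/andP: (fa_prob01 (lam_prob n) mE).
- rewrite /ultralimit (_ : (fun n => lam n setT) = fun=> 1) ?lim_cst //.
  by apply: funext => n; case: (lam_prob n).
- apply: (cvg_lim (@Rhausdorff R)).
  have -> : (fun n => lam n (E `|` F)) = (fun n => lam n E + lam n F).
    by apply: funext => n; case: (lam_prob n) => _ _ ->.
  by have := cvgD (ultralimit_cvg mE) (ultralimit_cvg mF); apply.
Qed.

Lemma ultralimit_invariant : U `=>` \oo ->
  meq (markov_op p (ultralimit U lam)) (ultralimit U lam).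
Proof.
move=> U_oo E mE.
have Alam_cvg : markov_op p (lam n) E @[n --> U] --> markov_op p (ultralimit U lam) E.
  apply: fa_integral_setwise_cvg => //; first exact: ultralimit_fa_prob.
  - by move=> B mB; exact: ultralimit_cvg.
  - exact: measurable_transition_fun.
  - by move=> x; exact: transition_fun01.
have Alam_cvg' : markov_op p (lam n) E @[n --> U] --> ultralimit U lam E.
  have defect_cvg := cvg_trans (cvg_app _ U_oo) (lam_almost_invariant _ mE).
  have -> : (fun n => markov_op p (lam n) E) =
            (fun n => lam n E + (markov_op p (lam n) E - lam n E)).
    by apply: funext => n; rewrite addrC subrK.
  by have := cvgD (ultralimit_cvg mE) defect_cvg; rewrite addr0; apply.
by rewrite -(cvg_lim (@Rhausdorff R) Alam_cvg) (cvg_lim (@Rhausdorff R) Alam_cvg').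
Qed.

End Ultralimit.

Lemma almost_invariant_cvg (mu : set X -> R) :
  (forall nu, fa_prob nu -> meq (markov_op p nu) nu -> meq nu mu) ->
  forall B, measurable B -> lam n B @[n --> \oo] --> mu B.
Proof.
move=> mu_unique B mB; apply/cvgrPdist_lt => e e0; apply: contrapT => not_near.
have [U [UU U_far U_oo]] : exists U : set_system nat,
    [/\ UltraFilter U, U [set n | e <= `|mu B - lam n B|] & U `=>` \oo].
  apply: ultra_frequently => M; apply: contrapT => none; apply: not_near.
  exists M => // n Mn /=; rewrite ltNge; apply/negP => far.
  exact: none (ex_intro2 _ _ n Mn far).
have nu_mu := mu_unique _ (ultralimit_fa_prob U) (ultralimit_invariant U U_oo) B mB.
have U_close : \forall n \near U, `|mu B - lam n B| < e.
  by rewrite -nu_mu; apply: (cvgrPdist_lt _ _).1 e0; exact: ultralimit_cvg.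
have [n [far close]] := filter_ex (filterI U_far U_close).
by move: close; rewrite ltNge far.
Qed.

End AlmostInvariantSequences.

Section GlidingHump.
Context {d : measure_display} {X : measurableType d} {R : realType}.

Lemma gliding_hump_gap {l l' : set X -> R} {P D E1 E2 : set X} :
  nonneg_additive l -> nonneg_additive l' ->
  measurable P -> measurable D -> measurable E1 -> measurable E2 -> E2 `<=` E1 ->
  P `&` E1 = set0 -> P `<=` D -> E1 `\` E2 `<=` D -> D `<=` P `|` E1 ->
  l' P + (l' E1 - l' E2) - (l P + l E1) <= l' D - l D.
Proof.
move=> l_add l'_add mP mD mE1 mE2 E21 PE1 PD E12D DPE1.
have mDE1 : measurable (D `&` E1) by exact: measurableI.
have splitD : D = P `|` (D `&` E1).
  apply/seteqP; split=> x; last by case=> [/PD|[]].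
  by move=> Dx; case: (DPE1 x Dx) => [Px|E1x]; [left|right].
have disjP : P `&` (D `&` E1) = set0 by rewrite setICA PE1 setI0.
have lD : l D = l P + l (D `&` E1) by rewrite {1}splitD (faU l_add).
have l'D : l' D = l' P + l' (D `&` E1) by rewrite {1}splitD (faU l'_add).
have : l (D `&` E1) <= l E1 by apply: (fa_le l_add mDE1 mE1); exact: subIsetr.
have : l' (E1 `\` E2) <= l' (D `&` E1).
  apply: (fa_le l'_add (measurableD mE1 mE2) mDE1) => x E12x.
  by split; [exact: E12D|case: E12x].
rewrite (faD l'_add) //; lra.
Qed.

Variables (lam : nat -> set X -> R) (mu : set X -> R).
Hypotheses (lam_add : forall n, nonneg_additive (lam n))
  (lam_cont : forall n, continuous_at_set0 (lam n)) (mu_add : nonneg_additive mu)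
  (lam_mu : forall B, measurable B -> lam n B @[n --> \oo] --> mu B).

Section Humps.
Variables (E : nat -> set X) (e : R).
Hypotheses (mE : forall j, measurable (E j)) (Edec : forall j, E j.+1 `<=` E j)
  (Ecap : \bigcap_j E j = set0) (e0 : 0 < e).

(* One step from (J, P) to (J', P') adds the ring E J1 `\` E J' to P, where
   lam n is close to mu on P but small on E J1, while lam n' is close to mu on
   P and on E J1 but small on E J'.  The premise [measurable s.2] only makes the
   relation total, as required by [dependent_choice]. *)
Definition hump_step (s s' : nat * set X) : Prop :=
  measurable s.2 -> exists n n' J1 : nat,
    [/\ (s.1 <= n)%N && (s.1 <= n')%N, (s.1 < J1 < s'.1)%N,
        s'.2 = s.2 `|` (E J1 `\` E s'.1),
        lam n s.2 < mu s.2 + e /\ lam n (E J1) < e &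
        [/\ mu s.2 - e < lam n' s.2, mu (E J1) - e < lam n' (E J1) &
            lam n' (E s'.1) < e]].

Lemma lam_eventually_close {B} : measurable B ->
  exists M, forall n, (M <= n)%N -> `|lam n B - mu B| < e.
Proof.
move=> mB; have [M _ HM] := (cvgrPdist_lt _ _).1 (lam_mu _ mB) e e0.
by exists M => n Mn; rewrite distrC; exact: HM.
Qed.

Lemma lam_eventually_small n J : exists J', (J < J')%N /\ lam n (E J') < e.
Proof.
have [M HM] := (cvgr0_nonnegP (fun j => fa_ge0 (lam_add n) (mE j))).1
  (lam_cont n E mE Edec Ecap) e e0.
by exists (maxn M J.+1); rewrite leq_maxr HM ?leq_maxl.
Qed.

Lemma hump_step_exists s : exists s', hump_step s s'.
Proof.
case: s => J P; have [mP|nmP] := pselect (measurable P); last by exists (0%N, set0).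
have [M1 closeP] := lam_eventually_close mP.
have [J1 [JJ1 small1]] := lam_eventually_small (maxn J M1) J.
have [M2 closeE1] := lam_eventually_close (mE J1).
have [J' [J1J' small']] := lam_eventually_small (maxn J (maxn M1 M2)) J1.
exists (J', P `|` (E J1 `\` E J')) => _.
exists (maxn J M1), (maxn J (maxn M1 M2)), J1; rewrite /= !leq_maxl JJ1 J1J'; split=> //.
- split=> //; have := closeP (maxn J M1) (leq_maxr _ _); rewrite ltr_norml; lra.
- have M1n' : (M1 <= maxn J (maxn M1 M2))%N by rewrite !leq_max leqnn !orbT.
  have M2n' : (M2 <= maxn J (maxn M1 M2))%N by rewrite !leq_max leqnn !orbT.
  move: (closeP _ M1n') (closeE1 _ M2n'); rewrite !ltr_norml => /andP[? ?] /andP[? ?].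
  by split=> //; lra.
Qed.

Section HumpSequence.
Variable s : nat -> nat * set X.
Hypotheses (s0 : s 0%N = (0%N, set0)) (s_step : forall k, hump_step (s k) (s k.+1)).
Let J k := (s k).1.
Let P k := (s k).2.

Lemma measurable_hump k : measurable (P k).
Proof.
elim: k => [|k IH]; first by rewrite /P s0; exact: measurable0.
have [n [n' [J1 [_ _ PS _ _]]]] := s_step k IH.
by rewrite /P PS; apply: measurableU => //; exact: measurableD.
Qed.

Lemma hump_stepE k : exists n n' J1 : nat,
  [/\ (J k <= n)%N && (J k <= n')%N, (J k < J1 < J k.+1)%N,
      P k.+1 = P k `|` (E J1 `\` E (J k.+1)),
      lam n (P k) < mu (P k) + e /\ lam n (E J1) < e &
      [/\ mu (P k) - e < lam n' (P k), mu (E J1) - e < lam n' (E J1) &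
          lam n' (E (J k.+1)) < e]].
Proof. exact: s_step k (measurable_hump k). Qed.

Lemma hump_index_ge k : (k <= J k)%N.
Proof.
elim: k => [|k IH] //; have [n [n' [J1 [_ /andP[kJ1 J1k] _ _ _]]]] := hump_stepE k.
by apply: leq_ltn_trans IH (ltn_trans kJ1 J1k).
Qed.

Lemma hump_index_mono {i k} : (i <= k)%N -> (J i <= J k)%N.
Proof.
move=> /subnKC <-; elim: (k - i)%N => [|l IH]; first by rewrite addn0.
have [n [n' [J1 [_ /andP[JJ1 J1J] _ _ _]]]] := hump_stepE (i + l).
by rewrite addnS; apply: leq_trans IH (ltnW (ltn_trans JJ1 J1J)).
Qed.

Lemma hump_ring_sub k : P k.+1 `<=` P k `|` E (J k).
Proof.
have [n [n' [J1 [_ /andP[JJ1 _] -> _ _]]]] := hump_stepE k.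
move=> x [Px|[E1x _]]; [by left|right].
exact: decreasing_setsW Edec _ _ (ltnW JJ1) x E1x.
Qed.

Lemma hump_disjoint k : P k `&` E (J k) = set0.
Proof.
elim: k => [|k IH]; first by rewrite /P s0 set0I.
have [n [n' [J1 [_ /andP[JJ1 J1J] -> _ _]]]] := hump_stepE k.
apply/seteqP; split=> x // [[Px|[_ nEx]] Ex] //.
have : (P k `&` E (J k)) x.
  by split=> //; apply: decreasing_setsW Edec _ _ (ltnW (ltn_trans JJ1 J1J)) x Ex.
by rewrite IH.
Qed.

Lemma hump_mono {i k} : (i <= k)%N -> P i `<=` P k.
Proof.
move=> /subnKC <-; elim: (k - i)%N => [|l IH]; first by rewrite addn0.
have [n [n' [J1 [_ _ PS _ _]]]] := hump_stepE (i + l).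
by rewrite addnS PS; apply: subset_trans IH _ => x Px; left.
Qed.

Lemma hump_cover k l : P l `<=` P k `|` E (J k).
Proof.
elim: l => [|l IH]; first by rewrite /P s0.
move=> x Px; case: (leqP k l) => [kl|lk]; last by left; exact: hump_mono lk x Px.
case: (hump_ring_sub l x Px) => [/IH //|EJx]; right.
exact: decreasing_setsW Edec _ _ (hump_index_mono kl) x EJx.
Qed.

(* With D the union of all rings, [gliding_hump_gap] makes lam n' D - lam n D
   exceed mu (E J1) - 5 e >= 2 e, although both are e-close to mu D. *)
Lemma hump_sequence_contradiction : ~ (forall j, 7 * e <= mu (E j)).
Proof.
move=> mu_big; pose D := \bigcup_k P k.
have mD : measurable D by apply: bigcup_measurable => k _; exact: measurable_hump.
have [M closeD] := lam_eventually_close mD.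
have [n [n' [J1 [/andP[Jn Jn'] /andP[JJ1 J1J] PS [lamP lamE1] [lam'P lam'E1 lam'E']]]]] :=
  hump_stepE M.
have E'E1 : E (J M.+1) `<=` E J1 := decreasing_setsW Edec _ _ (ltnW J1J).
have E1EJ : E J1 `<=` E (J M) := decreasing_setsW Edec _ _ (ltnW JJ1).
have PE1 : P M `&` E J1 = set0.
  by apply/seteqP; split=> x // [Px /E1EJ Ex]; rewrite -(hump_disjoint M); split.
have PD : P M `<=` D by move=> x Px; exists M.
have ringD : E J1 `\` E (J M.+1) `<=` D.
  by move=> x ring_x; exists M.+1 => //; rewrite PS; right.
have DPE1 : D `<=` P M `|` E J1.
  move=> x [l _ /(hump_cover M.+1)]; rewrite PS => -[[Px|[E1x _]]|/E'E1 E1x].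
  - by left.
  - by right.
  - by right.
have := gliding_hump_gap (lam_add n) (lam_add n') (measurable_hump M) mD (mE J1)
  (mE (J M.+1)) E'E1 PE1 PD ringD DPE1.
have Mn : (M <= n)%N := leq_trans (hump_index_ge M) Jn.
have Mn' : (M <= n')%N := leq_trans (hump_index_ge M) Jn'.
move: (closeD n Mn) (closeD n' Mn') (mu_big J1); rewrite !ltr_norml.
(* [lra] would choke on the equations between sets. *)
move=> /andP[? ?] /andP[? ?] ? ?; clear s0 PS PE1; lra.
Qed.

End HumpSequence.

Lemma mu_not_bounded_below : ~ (forall j, 7 * e <= mu (E j)).
Proof.
have [s [s0 s_step]] := dependent_choice (fun x => cid (hump_step_exists x)) (0%N, set0).
exact: hump_sequence_contradiction s0 s_step.
Qed.

End Humps.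

Lemma setwise_limit_continuous_at_set0 : continuous_at_set0 mu.
Proof.
move=> E mE Edec Ecap; apply/(cvgr0_nonnegP (fun j => fa_ge0 mu_add (mE j))) => eps eps0.
apply: contrapT => far; have e0 : 0 < eps / 7 by rewrite divr_gt0.
apply: (mu_not_bounded_below _ _ mE Edec Ecap e0) => j.
rewrite mulrC divfK ?pnatr_eq0 //.
rewrite leNgt; apply/negP => small; apply: far; exists j => k jk.
exact: le_lt_trans (fa_le mu_add (mE k) (mE j) (decreasing_setsW Edec _ _ jk)) small.
Qed.

End GlidingHump.

Section CesaroAverages.
Context {d : measure_display} {X : measurableType d} {R : realType}.
Variables (p : X -> set X -> R) (p_tf : transition_function p).
Variables (rho : set X -> R) (rho_prob : fa_prob rho) (rho_cont : continuous_at_set0 rho).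

Definition markov_orbit k := iter k (markov_op p) rho.

Definition cesaro_average n : set X -> R :=
  fun E => \sum_(k < n.+1) n.+1%:R^-1 * markov_orbit k E.

Lemma markov_orbit_fa_prob k : fa_prob (markov_orbit k).
Proof. by elim: k => [|k IH] //=; exact: markov_op_fa_prob. Qed.

Lemma markov_orbit_continuous_at_set0 k : continuous_at_set0 (markov_orbit k).
Proof.
elim: k => [|k IH] //=; apply: markov_op_continuous_at_set0 => //.
exact: markov_orbit_fa_prob.
Qed.

Lemma cesaro_average_fa_prob n : fa_prob (cesaro_average n).
Proof.
have [avg0 avgU] : nonneg_additive (cesaro_average n).
  apply: nonneg_additive_sum => [k|_]; last by rewrite invr_ge0.
  exact: fa_prob_nonneg_additive (markov_orbit_fa_prob k).
split=> //; have mass k : markov_orbit k setT = 1 by case: (markov_orbit_fa_prob k).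
rewrite /cesaro_average; under eq_bigr do rewrite mass mulr1.
by rewrite sumr_const card_ord -[_ *+ _]mulr_natr mulVf ?pnatr_eq0.
Qed.

Lemma cesaro_average_continuous_at_set0 n : continuous_at_set0 (cesaro_average n).
Proof. apply: continuous_at_set0_sum => k; exact: markov_orbit_continuous_at_set0. Qed.

Lemma cesaro_average_almost_invariant E : measurable E ->
  markov_op p (cesaro_average n) E - cesaro_average n E @[n --> \oo] --> 0.
Proof.
move=> mE; have pE01 x := transition_fun01 p_tf x mE.
have orbit_add k := fa_prob_nonneg_additive (markov_orbit_fa_prob k).
have defect n : markov_op p (cesaro_average n) E - cesaro_average n E =
    n.+1%:R^-1 * (markov_orbit n.+1 E - markov_orbit 0 E).
  rewrite /markov_op (fa_integral_sum (fun k : 'I_n.+1 => orbit_add k)) //; last first.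
    exact: measurable_transition_fun.
  rewrite /cesaro_average -sumrB; under eq_bigr do rewrite -mulrBr.
  rewrite -mulr_sumr; congr (_ * _).
  pose u k := fa_integral (markov_orbit k) (p^~ E) - markov_orbit k E.
  rewrite -(big_mkord xpredT u).
  exact: (telescope_sumr (fun k => markov_orbit k E)).
apply: (@squeeze_cvgr _ _ _ _ (fun n => - n.+1%:R^-1) (fun n => n.+1%:R^-1)).
- near=> n; rewrite defect.
  have := fa_prob01 (markov_orbit_fa_prob n.+1) mE.
  have := fa_prob01 (markov_orbit_fa_prob 0) mE.
  have w0 : 0 < n.+1%:R^-1 :> R by rewrite invr_gt0.
  move=> /andP[? ?] /andP[? ?]; rewrite -ler_norml normrM (ger0_norm (ltW w0)).
  by apply: ler_piMr; [exact: ltW|rewrite ler_norml; apply/andP; split; lra].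
- by rewrite -oppr0; apply: cvgN; exact: cvg_harmonic.
- exact: cvg_harmonic.
Unshelve. all: by end_near.
Qed.

End CesaroAverages.

Section MeanMeasure.
Context {d : measure_display} {X : measurableType d} {R : realType}.
Context {m : nat} {mu : nat -> set X -> R}.
Hypothesis mu_add : forall i, (i < m)%N -> nonneg_additive (mu i).

Lemma mean_measure_nonneg_additive : nonneg_additive (mean_measure m mu).
Proof.
have -> : mean_measure m mu = fun E => \sum_(i < m) m%:R^-1 * mu i E.
  by apply: funext => E; rewrite /mean_measure mulr_sumr.
apply: nonneg_additive_sum => [i|_]; [exact: mu_add|by rewrite invr_ge0].
Qed.

Lemma le_mean_measure i E : (i < m)%N -> measurable E ->
  0 <= mu i E <= m%:R * mean_measure m mu E.
Proof.
move=> im mE; have m0 : m%:R != 0 :> R by rewrite pnatr_eq0 -lt0n (leq_ltn_trans _ im).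
rewrite (fa_ge0 (mu_add i im) mE) /mean_measure mulrA mulfV // mul1r /=.
rewrite (bigD1 (Ordinal im)) //= lerDl; apply: sumr_ge0 => j _.
by case: (mu_add _ (ltn_ord j)) => + _; apply.
Qed.

End MeanMeasure.

Theorem theorem4p7 (d : measure_display) (X : measurableType d) (R : realType)
  (p : X -> set X -> R) (m : nat) (mu : nat -> set X -> R) :
  infinite_set [set: X] ->
  (forall x : X, measurable [set x]) ->
  transition_function p ->
  (0 < m)%N ->
  (forall i, (i < m)%N -> fa_prob (mu i)) ->
  (forall i j, (i < m)%N -> (j < m)%N -> i <> j -> ~ meq (mu i) (mu j)) ->
  (forall i, (i < m)%N -> meq (markov_op p (mu i)) (mu (i.+1 %% m)%N)) ->
  (forall nu : set X -> R, fa_prob nu ->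
     (meq (markov_op p nu) nu <-> meq nu (mean_measure m mu))) ->
  (forall i, (i < m)%N -> countably_additive (mu i)) /\
  countably_additive (mean_measure m mu).
Proof.
move=> X_inf _ p_tf _ mu_prob _ _ mu_unique.
have [x0 _] : exists x : X, True.
  apply: contrapT => X0; apply: X_inf; rewrite (_ : setT = set0) ?finite_set0 //.
  by apply/seteqP; split=> x // _; apply: X0; exists x.
have mu_add i (im : (i < m)%N) := fa_prob_nonneg_additive (mu_prob i im).
have mean_add := mean_measure_nonneg_additive mu_add.
have px0_prob := transition_fun_fa_prob p_tf x0.
have px0_cont := transition_fun_continuous_at_set0 p_tf x0.
pose lam := cesaro_average p (p x0).
have lam_prob n : fa_prob (lam n) by exact: cesaro_average_fa_prob.
have lam_cont n : continuous_at_set0 (lam n) by exact: cesaro_average_continuous_at_set0.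
have lam_mean : forall B, measurable B -> lam n B @[n --> \oo] --> mean_measure m mu B.
  apply: (almost_invariant_cvg _ p_tf _ lam_prob).
    exact: cesaro_average_almost_invariant.
  by move=> nu nu_prob; exact: (mu_unique nu nu_prob).1.
have mean_cont : continuous_at_set0 (mean_measure m mu).
  apply: (setwise_limit_continuous_at_set0 _ _ _ lam_cont mean_add lam_mean) => n.
  exact: fa_prob_nonneg_additive.
split=> [i im|]; last exact: continuous_at_set0_countably_additive mean_add mean_cont.
apply: continuous_at_set0_countably_additive (mu_add i im) _.
by apply: continuous_at_set0_le mean_cont => E mE; exact: le_mean_measure.
Qed.
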